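(* Consider the MaxWeight scheduling system described in the context, with $\boldsymbol\lambda^{(\epsilon)}=\boldsymbol\lambda^{(k)}-\epsilon\mathbf c^{(k)}$, and let $\overline{\mathbf S}$ be the service vector selected by MaxWeight in a slot when the queue-length vector is $\overline{\mathbf Q}^{(\epsilon)}$ (stationary). Then for any $r'>1$ there exist constants $\beta_2<\infty$ and $\epsilon_0>0$, independent of $\epsilon$, such that for all $\epsilon\in(0,\epsilon_0)$, $$\mathbb E\Big[\big(b^{(k)}-\langle\mathbf c^{(k)},\overline{\mathbf S}\rangle\big)^{r'}\Big]\le\beta_2\,\epsilon .$$
   Context: Scheduling system: time is slotted; there are $N$ queues. Arrivals $A_n(t)$ are independent across $n$, i.i.d. over time, nonnegative integer-valued with $A_n(t)\le A_{max}$, with mean vector $\boldsymbol\lambda^{(\epsilon)}$. $\mathcal S\subset\mathbb Z_{\ge0}^N$ is a finite set of feasible service vectors with entries at most $S_{max}$. In each slot a service vector $\mathbf S(t)\in\mathcal S$ is chosen, and $Q_n(t+1)=Q_n(t)+A_n(t)-S_n(t)+U_n(t)$ with $U_n(t)=\max(S_n(t)-A_n(t)-Q_n(t),0)$. The capacity region $\mathcal R=\mathrm{ConvexHull}(\mathcal S)$ is the polyhedron $\{\mathbf r\ge0:\langle\mathbf c^{(j)},\mathbf r\rangle\le b^{(j)},\ j=1,\dots,K\}$, where each $\mathbf c^{(j)}\in\mathbb R^N_{\ge0}$ has Euclidean norm $1$ and $b^{(j)}>0$. The $k$th face is $\mathcal F^{(k)}=\{\mathbf r\in\mathcal R:\langle\mathbf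 c^{(k)},\mathbf r\rangle=b^{(k)}\}$; a face index $k$ and a point $\boldsymbol\lambda^{(k)}$ in the relative interior of $\mathcal F^{(k)}$ are fixed. MaxWeight policy: $\mathbf S(t)$ is chosen uniformly at random from $\arg\max_{\mathbf S\in\mathcal S}\langle\mathbf Q(t),\mathbf S\rangle$. $\overline{\mathbf Q}^{(\epsilon)}$ is distributed according to the stationary distribution of the queue-length chain under MaxWeight. *)

From Stdlib Require Import Reals Lra List.
Import ListNotations.
Open Scope R_scope.

Fixpoint sumR (l : list R) : R :=
  match l with [] => 0 | x :: t => x + sumR t end.

Definition dotR (x y : list R) : R :=
  sumR (map (fun p => fst p * snd p) (combine x y)).

Definition toR (v : list nat) : list R := map INR v.

Definition norm2 (x : list R) : R := sqrt (dotR x x).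

Definition vsub (x y : list R) : list R :=
  map (fun p => fst p - snd p) (combine x y).

Definition dist (x y : list R) : R := norm2 (vsub x y).

(* ---------- sums of NONNEGATIVE terms over a countable set ----------
   s is the sum of f over {x | P x}: the least upper bound of all finite
   partial sums over duplicate-free lists of elements satisfying P.
   (Only used with nonnegative f.) *)
Definition has_sum_on {T : Type} (P : T -> Prop) (f : T -> R) (s : R) : Prop :=
  is_lub (fun r => exists l : list T,
             NoDup l /\ Forall P l /\ r = sumR (map f l)) s.

Definition in_conv_hull (N : nat) (Sset : list (list nat)) (r : list R) : Prop :=
  length r = N /\
  exists w : list R,
    length w = length Sset /\ Forall (fun x => 0 <= x) w /\ sumR w = 1 /\
    forall n, (n < N)%nat ->
      nth n r 0 = sumR (map (fun p => fst p * INR (nth n (snd p) 0%nat))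
                            (combine w Sset)).

Definition in_affine_hull (N : nat) (F : list R -> Prop) (mu : list R) : Prop :=
  length mu = N /\
  exists (xs : list (list R)) (t : list R),
    length t = length xs /\ Forall F xs /\ sumR t = 1 /\
    forall n, (n < N)%nat ->
      nth n mu 0 = sumR (map (fun p => fst p * nth n (snd p) 0) (combine t xs)).

Definition in_rel_interior (N : nat) (F : list R -> Prop) (x : list R) : Prop :=
  F x /\ exists d, 0 < d /\
    forall mu, in_affine_hull N F mu -> dist mu x < d -> F mu.

Definition face (N : nat) (Sset : list (list nat)) (c : list R) (b : R)
  (r : list R) : Prop :=
  in_conv_hull N Sset r /\ dotR c r = b.

Definition weight (Q S : list nat) : nat :=
  fold_right Nat.add 0%nat (map (fun p => (fst p * snd p)%nat) (combine Q S)).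

Definition maxweight (Sset : list (list nat)) (Q : list nat) : nat :=
  fold_right Nat.max 0%nat (map (weight Q) Sset).

Definition argmax (Sset : list (list nat)) (Q : list nat) : list (list nat) :=
  filter (fun S => Nat.eqb (weight Q S) (maxweight Sset Q)) Sset.

Fixpoint vecs_upto (n m : nat) : list (list nat) :=
  match n with
  | O => [[]]
  | S n' => flat_map (fun a => map (cons a) (vecs_upto n' m)) (seq 0 (S m))
  end.

(* independent arrivals: joint pmf is the product of the marginals pA n *)
Definition joint_prob (pA : nat -> nat -> R) (a : list nat) : R :=
  fold_right Rmult 1
    (map (fun p => pA (fst p) (snd p)) (combine (seq 0 (length a)) a)).

(* Q(t+1) = Q + A - S + U = max(Q + A - S, 0) componentwise (truncated nat subtraction) *)
Definition next_state (Q a S : list nat) : list nat :=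
  map (fun p => (fst p + fst (snd p) - snd (snd p))%nat) (combine Q (combine a S)).

(* one-step transition probability of the queue-length chain under MaxWeight
   (service vector uniform over the argmax set) *)
Definition trans (N Amax : nat) (Sset : list (list nat)) (pA : nat -> nat -> R)
  (Q Q' : list nat) : R :=
  let M := argmax Sset Q in
  sumR (map (fun S => / INR (length M) *
     sumR (map (fun a => if list_eq_dec Nat.eq_dec (next_state Q a S) Q'
                         then joint_prob pA a else 0)
               (vecs_upto N Amax))) M).

Definition is_stationary (N Amax : nat) (Sset : list (list nat))
  (pA : nat -> nat -> R) (pi : list nat -> R) : Prop :=
  (forall Q, 0 <= pi Q) /\
  (forall Q, length Q <> N -> pi Q = 0) /\
  has_sum_on (fun Q => length Q = N) pi 1 /\
  forall Q', length Q' = N ->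
    has_sum_on (fun Q => length Q = N)
               (fun Q => pi Q * trans N Amax Sset pA Q Q') (pi Q').

Definition valid_arrivals (N Amax : nat) (pA : nat -> nat -> R) (lam : list R) : Prop :=
  forall n, (n < N)%nat ->
    (forall a, 0 <= pA n a) /\
    (forall a, (Amax < a)%nat -> pA n a = 0) /\
    sumR (map (pA n) (seq 0 (S Amax))) = 1 /\
    sumR (map (fun a => INR a * pA n a) (seq 0 (S Amax))) = nth n lam 0.

(* real power of a nonnegative base, with 0^y = 0 *)
Definition rpow (x y : R) : R :=
  if Rle_dec x 0 then 0 else Rpower x y.

(* E[(b - <c, S>)^r' | Q] with S uniform on the MaxWeight argmax set *)
Definition unused_moment (Sset : list (list nat)) (c : list R) (b r' : R)
  (Q : list nat) : R :=
  let M := argmax Sset Q in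
  sumR (map (fun S => / INR (length M) * rpow (b - dotR c (toR S)) r') M).

From Stdlib Require Import Reals Lra List Classical Lia.
Import ListNotations.
Open Scope R_scope.

(* Every feasible S satisfies 0 <= b - <c,S> <= b, so the r'-th moment of the unused
   service is at most b^(r'-1) times its mean, and it suffices to show that the
   stationary mean unused service is at most eps.  One MaxWeight step changes
   V(Q) = <c,Q> by at least <c,A> - <c,S>, and E<c,A> = b - eps; stationarity of V
   therefore forces E[b - <c,S>] <= eps.  As the stationary law need not have a
   finite first moment, V is truncated at a level T and the balance is applied on
   finite windows of states carrying all but an arbitrarily small part of the mass. *)

Lemma sumR_app l1 l2 : sumR (l1 ++ l2) = sumR l1 + sumR l2.
Proof. induction l1; simpl; [lra | rewrite IHl1; lra]. Qed.

Lemma sumR_ext {A} (f g : A -> R) l :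
  (forall x, In x l -> f x = g x) -> sumR (map f l) = sumR (map g l).
Proof.
  induction l; simpl; intros H; auto.
  rewrite H, IHl by auto. reflexivity.
Qed.

Lemma sumR_le {A} (f g : A -> R) l :
  (forall x, In x l -> f x <= g x) -> sumR (map f l) <= sumR (map g l).
Proof.
  induction l; simpl; intros H; [lra|].
  assert (sumR (map f l) <= sumR (map g l)) by auto.
  specialize (H a (or_introl eq_refl)). lra.
Qed.

Lemma sumR_plus {A} (f g : A -> R) l :
  sumR (map (fun x => f x + g x) l) = sumR (map f l) + sumR (map g l).
Proof. induction l; simpl; [lra | rewrite IHl; lra]. Qed.

Lemma sumR_minus {A} (f g : A -> R) l :
  sumR (map (fun x => f x - g x) l) = sumR (map f l) - sumR (map g l).
Proof. induction l; simpl; [lra | rewrite IHl; lra]. Qed.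

Lemma sumR_mull {A} (f : A -> R) r l :
  sumR (map (fun x => r * f x) l) = r * sumR (map f l).
Proof. induction l; simpl; [lra | rewrite IHl; lra]. Qed.

Lemma sumR_mulr {A} (f : A -> R) r l :
  sumR (map (fun x => f x * r) l) = sumR (map f l) * r.
Proof. induction l; simpl; [lra | rewrite IHl; lra]. Qed.

Lemma sumR_const {A} r (l : list A) :
  sumR (map (fun _ => r) l) = INR (length l) * r.
Proof. induction l; simpl length; [simpl; lra|]. rewrite S_INR. simpl. rewrite IHl. lra. Qed.

Lemma sumR_nonneg {A} (f : A -> R) l :
  (forall x, In x l -> 0 <= f x) -> 0 <= sumR (map f l).
Proof.
  intros H. rewrite <- (Rmult_0_r (INR (length l))), <- sumR_const.
  apply sumR_le; auto.
Qed.

Lemma sumR_swap {A B} (F : A -> B -> R) l1 l2 :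
  sumR (map (fun x => sumR (map (fun y => F x y) l2)) l1) =
  sumR (map (fun y => sumR (map (fun x => F x y) l1)) l2).
Proof.
  induction l1; simpl.
  - induction l2; simpl; auto. rewrite <- IHl2; lra.
  - rewrite IHl1, <- sumR_plus. reflexivity.
Qed.

Lemma sumR_flat_map {A B} (f : B -> R) (g : A -> list B) l :
  sumR (map f (flat_map g l)) = sumR (map (fun x => sumR (map f (g x))) l).
Proof. induction l; simpl; auto. rewrite map_app, sumR_app, IHl. reflexivity. Qed.

Lemma sumR_single {A} (F : A -> R) l x :
  NoDup l -> In x l -> (forall y, y <> x -> F y = 0) -> sumR (map F l) = F x.
Proof.
  induction l as [|a l IH]; simpl; intros Hnd Hin H; [tauto|].
  inversion Hnd; subst.
  destruct Hin as [<-|Hin].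
  - rewrite (sumR_ext _ (fun _ => 0)), sumR_const; [lra|].
    intros y Hy. apply H. intros ->. tauto.
  - rewrite IH, H; auto; [lra|]. intros ->; tauto.
Qed.

Lemma sumR_incl {A} (f : A -> R) l1 l2 :
  NoDup l1 -> NoDup l2 -> incl l1 l2 -> (forall x, In x l2 -> 0 <= f x) ->
  sumR (map f l1) <= sumR (map f l2).
Proof.
  revert l2. induction l1 as [|a l1 IH]; simpl; intros l2 H1 H2 Hi Hf.
  - apply sumR_nonneg; auto.
  - inversion H1; subst.
    destruct (in_split a l2) as [x [y ->]]; [apply Hi; simpl; auto|].
    rewrite map_app, sumR_app. simpl.
    assert (sumR (map f l1) <= sumR (map f (x ++ y))).
    { apply IH; [auto | eapply NoDup_remove_1; eauto | |].
      - intros z Hz. assert (Hz' : In z (x ++ a :: y)) by (apply Hi; simpl; auto).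
        apply in_app_or in Hz'. apply in_or_app. simpl in Hz'.
        destruct Hz' as [?|[->|?]]; tauto.
      - intros z Hz; apply Hf. apply in_app_or in Hz. apply in_or_app; simpl; tauto. }
    rewrite map_app, sumR_app in H. lra.
Qed.

Lemma sumR_filter {A} (f : A -> R) (p : A -> bool) l :
  sumR (map (fun x => if p x then f x else 0) l) = sumR (map f (filter p l)).
Proof. induction l; simpl; auto. destruct (p a); simpl; rewrite IHl; lra. Qed.

Lemma sumR_elem_le {A} (f : A -> R) l x :
  In x l -> (forall y, In y l -> 0 <= f y) -> f x <= sumR (map f l).
Proof.
  induction l; simpl; intros Hin H; [tauto|].
  destruct Hin as [->|Hin].
  - assert (0 <= sumR (map f l)) by (apply sumR_nonneg; auto). lra.
  - assert (0 <= f a) by auto. assert (f x <= sumR (map f l)) by auto. lra.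
Qed.

Lemma has_sum_on_ub {T} (P : T -> Prop) f s l :
  has_sum_on P f s -> NoDup l -> Forall P l -> sumR (map f l) <= s.
Proof. intros [H _] Hn Hf. apply H. exists l; auto. Qed.

Lemma has_sum_on_approx {T} (P : T -> Prop) f s d :
  has_sum_on P f s -> 0 < d ->
  exists l, NoDup l /\ Forall P l /\ s - d < sumR (map f l).
Proof.
  intros [_ Hlub] Hd. apply NNPP; intro Hn.
  enough (s <= s - d) by lra.
  apply Hlub. intros r [l [Hl [Hf ->]]].
  apply Rnot_lt_le. intros Hlt. apply Hn. exists l; auto.
Qed.

Lemma has_sum_on_bounded {T} (P : T -> Prop) f M :
  (forall l, NoDup l -> Forall P l -> sumR (map f l) <= M) ->
  exists s, has_sum_on P f s /\ s <= M.
Proof.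
  intros H.
  destruct (completeness (fun r => exists l : list T,
             NoDup l /\ Forall P l /\ r = sumR (map f l))) as [s Hs].
  - exists M. intros r [l [H1 [H2 ->]]]. auto.
  - exists 0, []. repeat constructor.
  - exists s. split; [exact Hs|]. apply Hs. intros r [l [H1 [H2 ->]]]. auto.
Qed.

Lemma dotR_nth c x N : length c = N -> length x = N ->
  dotR c x = sumR (map (fun i => nth i c 0 * nth i x 0) (seq 0 N)).
Proof.
  revert x N. induction c as [|a c IH]; intros x N Hc Hx; simpl in Hc; subst; [reflexivity|].
  destruct x as [|y x]; simpl in Hx; [lia|]. injection Hx as Hx.
  unfold dotR in *. simpl. rewrite (IH x (length c)), <- seq_shift, map_map by auto.
  reflexivity.
Qed.

Lemma dotR_nonneg c x :
  Forall (fun v => 0 <= v) c -> Forall (fun v => 0 <= v) x -> 0 <= dotR c x.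
Proof.
  revert x. induction c as [|a c IH]; intros x Pc Px; [unfold dotR; simpl; lra|].
  destruct x as [|y x]; [unfold dotR; simpl; lra|].
  inversion Pc; inversion Px; subst. unfold dotR in *; simpl.
  specialize (IH x H2 H6). nra.
Qed.

Lemma dotR_vsub_scale c x e : length x = length c ->
  dotR c (vsub x (map (Rmult e) c)) = dotR c x - e * dotR c c.
Proof.
  revert x. induction c as [|a c IH]; intros x Hx.
  - unfold dotR, vsub; destruct x; simpl; lra.
  - destruct x as [|y x]; simpl in Hx; [lia|]. injection Hx as Hx.
    unfold dotR, vsub in *; simpl. rewrite IH by auto. lra.
Qed.

Lemma dotR_unit c : norm2 c = 1 -> dotR c c = 1.
Proof.
  unfold norm2. intros Hc. destruct (Rle_dec 0 (dotR c c)) as [Hle|Hlt].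
  - rewrite <- (sqrt_sqrt _ Hle), Hc. lra.
  - rewrite sqrt_neg_0 in Hc by lra. lra.
Qed.

Lemma nth_toR Q i : nth i (toR Q) 0 = INR (nth i Q 0%nat).
Proof. exact (map_nth INR Q 0%nat i). Qed.

Lemma length_toR Q : length (toR Q) = length Q.
Proof. apply length_map. Qed.

Lemma toR_nonneg Q : Forall (fun v => 0 <= v) (toR Q).
Proof. apply Forall_map, Forall_forall. intros; apply pos_INR. Qed.

Lemma dotR_toR_nonneg c Q : Forall (fun v => 0 <= v) c -> 0 <= dotR c (toR Q).
Proof. intros Pc. apply dotR_nonneg; auto using toR_nonneg. Qed.

Lemma vecs_upto_spec n m a : In a (vecs_upto n m) ->
  length a = n /\ forall i, (nth i a 0 <= m)%nat.
Proof.
  revert a. induction n; cbn [vecs_upto]; intros a H.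
  - destruct H as [<-|[]]. split; auto. intros [|i]; simpl; lia.
  - apply in_flat_map in H. destruct H as [x [Hx H]]. apply in_map_iff in H.
    destruct H as [a' [<- Ha']]. apply in_seq in Hx. destruct (IHn a' Ha') as [H1 H2].
    split; simpl; auto. intros [|i]; simpl; auto; lia.
Qed.

Definition joint_prob_from (pA : nat -> nat -> R) (k : nat) (a : list nat) : R :=
  fold_right Rmult 1 (map (fun p => pA (fst p) (snd p)) (combine (seq k (length a)) a)).

Lemma joint_prob_from_cons pA k x a :
  joint_prob_from pA k (x :: a) = pA k x * joint_prob_from pA (S k) a.
Proof. reflexivity. Qed.

Section JointProb.
Variables (pA : nat -> nat -> R) (m : nat).

Lemma joint_prob_from_sum n k :
  (forall j, (k <= j < k + n)%nat -> sumR (map (pA j) (seq 0 (S m))) = 1) ->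
  sumR (map (joint_prob_from pA k) (vecs_upto n m)) = 1.
Proof.
  revert k. induction n; intros k H; [simpl; unfold joint_prob_from; simpl; lra|].
  cbn [vecs_upto]. rewrite sumR_flat_map.
  rewrite (sumR_ext _ (fun x => pA k x * 1)).
  - rewrite sumR_mulr, H by lia. lra.
  - intros x _. rewrite map_map.
    rewrite (sumR_ext _ (fun a => pA k x * joint_prob_from pA (S k) a))
      by (intros; apply joint_prob_from_cons).
    rewrite sumR_mull, IHn; auto. intros j Hj; apply H; lia.
Qed.

Lemma joint_prob_from_mean n k i :
  (forall j, (k <= j < k + n)%nat -> sumR (map (pA j) (seq 0 (S m))) = 1) ->
  (i < n)%nat ->
  sumR (map (fun a => joint_prob_from pA k a * INR (nth i a 0%nat)) (vecs_upto n m)) =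
  sumR (map (fun x => INR x * pA (k + i)%nat x) (seq 0 (S m))).
Proof.
  revert k i. induction n; intros k i H Hi; [lia|].
  cbn [vecs_upto]. rewrite sumR_flat_map.
  assert (Htail : forall j, (S k <= j < S k + n)%nat -> sumR (map (pA j) (seq 0 (S m))) = 1)
    by (intros j Hj; apply H; lia).
  destruct i as [|i].
  - apply sumR_ext. intros x _. rewrite map_map.
    rewrite (sumR_ext _ (fun a => (pA k x * INR x) * joint_prob_from pA (S k) a))
      by (intros a _; rewrite joint_prob_from_cons; simpl nth; lra).
    rewrite sumR_mull, joint_prob_from_sum, Nat.add_0_r by exact Htail. lra.
  - rewrite (sumR_ext _ (fun x => pA k x *
      sumR (map (fun y => INR y * pA (S k + i)%nat y) (seq 0 (S m))))).
    + rewrite sumR_mulr, H by lia. replace (k + S i)%nat with (S k + i)%nat by lia. lra.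
    + intros x _. rewrite map_map.
      rewrite (sumR_ext _ (fun a => pA k x * (joint_prob_from pA (S k) a * INR (nth i a 0%nat))))
        by (intros a _; rewrite joint_prob_from_cons; simpl nth; lra).
      rewrite sumR_mull, IHn by (auto; lia). reflexivity.
Qed.

Lemma joint_prob_from_nonneg n k a :
  (forall j x, (k <= j < k + n)%nat -> 0 <= pA j x) ->
  In a (vecs_upto n m) -> 0 <= joint_prob_from pA k a.
Proof.
  revert k a. induction n; intros k a H Ha; cbn [vecs_upto] in Ha.
  - destruct Ha as [<-|[]]. unfold joint_prob_from; simpl; lra.
  - apply in_flat_map in Ha. destruct Ha as [x [_ Ha]]. apply in_map_iff in Ha.
    destruct Ha as [a' [<- Ha']]. rewrite joint_prob_from_cons.
    apply Rmult_le_pos; [apply H; lia|].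
    apply IHn; auto. intros; apply H; lia.
Qed.

End JointProb.

Definition arrival_mean (N Amax : nat) (pA : nat -> nat -> R) (h : list nat -> R) : R :=
  sumR (map (fun a => joint_prob pA a * h a) (vecs_upto N Amax)).

Section ArrivalMean.
Variables (N Amax : nat) (pA : nat -> nat -> R) (lam : list R).
Hypothesis Hv : valid_arrivals N Amax pA lam.

Lemma arrival_mean_const r : arrival_mean N Amax pA (fun _ => r) = r.
Proof.
  unfold arrival_mean. rewrite sumR_mulr.
  change (joint_prob pA) with (joint_prob_from pA 0).
  rewrite joint_prob_from_sum; [lra|]. intros j Hj. apply Hv; lia.
Qed.

Lemma arrival_mean_le h1 h2 :
  (forall a, In a (vecs_upto N Amax) -> h1 a <= h2 a) ->
  arrival_mean N Amax pA h1 <= arrival_mean N Amax pA h2.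
Proof.
  intros H. apply sumR_le. intros a Ha. apply Rmult_le_compat_l; auto.
  apply (joint_prob_from_nonneg pA Amax N 0); auto. intros j x Hj. apply Hv; lia.
Qed.

Lemma arrival_mean_plus h1 h2 :
  arrival_mean N Amax pA (fun a => h1 a + h2 a) =
  arrival_mean N Amax pA h1 + arrival_mean N Amax pA h2.
Proof. unfold arrival_mean. rewrite <- sumR_plus. apply sumR_ext. intros; lra. Qed.

Lemma arrival_mean_dot c : length c = N -> length lam = N ->
  arrival_mean N Amax pA (fun a => dotR c (toR a)) = dotR c lam.
Proof.
  intros Hc Hl. unfold arrival_mean.
  rewrite (sumR_ext _ (fun a => sumR (map (fun i =>
     nth i c 0 * (joint_prob_from pA 0 a * INR (nth i a 0%nat))) (seq 0 N)))).
  - rewrite sumR_swap, (dotR_nth c lam N) by auto. apply sumR_ext. intros i Hi.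
    apply in_seq in Hi. assert (Hi' : (i < N)%nat) by lia.
    rewrite sumR_mull, joint_prob_from_mean by (auto; intros; apply Hv; lia).
    destruct (Hv i Hi') as [_ [_ [_ <-]]]. reflexivity.
  - intros a Ha. destruct (vecs_upto_spec _ _ _ Ha) as [La _].
    rewrite (dotR_nth c _ N), <- sumR_mull by (rewrite ?length_toR; auto).
    apply sumR_ext. intros i _. rewrite nth_toR. change (joint_prob pA a) with (joint_prob_from pA 0 a). lra.
Qed.

End ArrivalMean.

Definition uavg {A} (M : list A) (f : A -> R) : R :=
  sumR (map (fun x => / INR (length M) * f x) M).

Section UniformAverage.
Variables (A : Type) (M : list A).
Hypothesis HM : M <> [].

Lemma uavg_const r : uavg M (fun _ => r) = r.
Proof.
  unfold uavg. rewrite sumR_const.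
  assert (INR (length M) <> 0) by (destruct M; [tauto|]; apply not_0_INR; simpl; lia).
  field. auto.
Qed.

Lemma uavg_le f g : (forall x, In x M -> f x <= g x) -> uavg M f <= uavg M g.
Proof.
  intros H. apply sumR_le. intros. apply Rmult_le_compat_l; auto.
  destruct M; [tauto|]. left. apply Rinv_0_lt_compat, lt_0_INR. simpl; lia.
Qed.

Lemma uavg_add_const f r : uavg M (fun x => f x + r) = uavg M f + r.
Proof.
  rewrite <- (uavg_const r) at 1. unfold uavg. rewrite <- sumR_plus.
  apply sumR_ext. intros; lra.
Qed.

Lemma uavg_scale f r : uavg M (fun x => r * f x) = r * uavg M f.
Proof. unfold uavg. rewrite <- sumR_mull. apply sumR_ext. intros; lra. Qed.

End UniformAverage.

Lemma argmax_incl Sset Q S : In S (argmax Sset Q) -> In S Sset.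
Proof. unfold argmax. rewrite filter_In. tauto. Qed.

Lemma fold_max_In l : l <> [] -> In (fold_right Nat.max 0%nat l) l.
Proof.
  induction l as [|x l IH]; [tauto|]. intros _. simpl.
  destruct l as [|y l]; [simpl; left; lia|].
  destruct (Nat.max_dec x (fold_right Nat.max 0%nat (y :: l))) as [E|E]; rewrite E.
  - now left.
  - right. apply IH. discriminate.
Qed.

Lemma argmax_nonempty Sset Q : Sset <> [] -> argmax Sset Q <> [].
Proof.
  intros H. unfold argmax, maxweight.
  destruct (in_map_iff (weight Q) Sset (fold_right Nat.max 0%nat (map (weight Q) Sset)))
    as [[S [HW HS]] _].
  { apply fold_max_In. destruct Sset; [tauto|discriminate]. }
  intros E. assert (Hin : In S (filter (fun S => Nat.eqb (weight Q S)
            (fold_right Nat.max 0%nat (map (weight Q) Sset))) Sset))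
    by (apply filter_In; split; [auto|apply Nat.eqb_eq; auto]).
  rewrite E in Hin. exact Hin.
Qed.

Lemma length_next_state Q a S N : length Q = N -> length a = N -> length S = N ->
  length (next_state Q a S) = N.
Proof. intros. unfold next_state. rewrite length_map, !length_combine. lia. Qed.

Lemma nth_next_state Q a S i N :
  length Q = N -> length a = N -> length S = N -> (i < N)%nat ->
  nth i (next_state Q a S) 0%nat = (nth i Q 0 + nth i a 0 - nth i S 0)%nat.
Proof.
  intros. unfold next_state.
  change 0%nat with ((fun p : nat * (nat * nat) => (fst p + fst (snd p) - snd (snd p))%nat)
                       (0%nat, (0%nat, 0%nat))) at 1.
  rewrite map_nth, combine_nth by (rewrite length_combine; lia).
  rewrite combine_nth by lia. reflexivity.
Qed.

Definition max_increment (c : list R) (N Amax : nat) : R :=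
  sumR (map (fun i => nth i c 0 * INR Amax) (seq 0 N)).

Lemma max_increment_nonneg c N Amax : Forall (fun v => 0 <= v) c -> 0 <= max_increment c N Amax.
Proof.
  intros Pc. apply sumR_nonneg. intros i _. apply Rmult_le_pos; [|apply pos_INR].
  destruct (Compare_dec.lt_dec i (length c)).
  - rewrite Forall_nth in Pc. auto.
  - rewrite nth_overflow by lia. lra.
Qed.

Section QueueStep.
Variables (c : list R) (N Amax : nat) (Q a S : list nat).
Hypotheses (Hc : length c = N) (Pc : Forall (fun v => 0 <= v) c)
           (HQ : length Q = N) (HS : length S = N) (Ha : In a (vecs_upto N Amax)).

(* The unused service U is nonnegative, so it can only increase the queues. *)
Lemma dotR_next_state_ge :
  dotR c (toR Q) + dotR c (toR a) - dotR c (toR S) <= dotR c (toR (next_state Q a S)).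
Proof.
  destruct (vecs_upto_spec _ _ _ Ha) as [La _].
  rewrite !(dotR_nth c _ N) by (rewrite ?length_toR; auto using length_next_state).
  rewrite <- sumR_plus, <- sumR_minus.
  apply sumR_le. intros i Hi. apply in_seq in Hi.
  rewrite !nth_toR, (nth_next_state Q a S i N) by (auto; lia).
  assert (0 <= nth i c 0) by (rewrite Forall_nth in Pc; apply Pc; lia).
  destruct (Compare_dec.le_lt_dec (nth i S 0%nat) (nth i Q 0%nat + nth i a 0%nat)).
  - rewrite minus_INR, plus_INR by auto. lra.
  - replace (nth i Q 0 + nth i a 0 - nth i S 0)%nat with 0%nat by lia.
    assert (INR (nth i Q 0%nat) + INR (nth i a 0%nat) <= INR (nth i S 0%nat))
      by (rewrite <- plus_INR; apply le_INR; lia).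
    simpl INR. nra.
Qed.

Lemma dotR_next_state_le :
  dotR c (toR (next_state Q a S)) <= dotR c (toR Q) + max_increment c N Amax.
Proof.
  destruct (vecs_upto_spec _ _ _ Ha) as [La Ba].
  rewrite !(dotR_nth c _ N) by (rewrite ?length_toR; auto using length_next_state).
  unfold max_increment. rewrite <- sumR_plus. apply sumR_le. intros i Hi. apply in_seq in Hi.
  rewrite !nth_toR, (nth_next_state Q a S i N) by (auto; lia).
  assert (0 <= nth i c 0) by (rewrite Forall_nth in Pc; apply Pc; lia).
  assert (INR (nth i Q 0 + nth i a 0 - nth i S 0)%nat <= INR (nth i Q 0%nat) + INR Amax)
    by (rewrite <- plus_INR; apply le_INR; specialize (Ba i); lia).
  nra.
Qed.

End QueueStep.

(** * Drift of a truncated Lyapunov function *)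

Definition mean_unused (Sset : list (list nat)) (c : list R) (b : R) (Q : list nat) : R :=
  uavg (argmax Sset Q) (fun S => b - dotR c (toR S)).

Definition step_mean (N Amax : nat) (Sset : list (list nat)) (pA : nat -> nat -> R)
  (g : list nat -> R) (Q : list nat) : R :=
  uavg (argmax Sset Q) (fun S => arrival_mean N Amax pA (fun a => g (next_state Q a S))).

Section Drift.
Variables (N Amax : nat) (Sset : list (list nat)) (pA : nat -> nat -> R)
          (lam c : list R) (b eps : R).
Hypotheses (Hc : length c = N) (Pc : Forall (fun v => 0 <= v) c)
           (HS : forall S, In S Sset -> length S = N /\ dotR c (toR S) <= b)
           (Hne : Sset <> [])
           (Hv : valid_arrivals N Amax pA lam) (Hl : length lam = N)
           (Hlam : dotR c lam = b - eps).

Lemma mean_unused_bounds Q : 0 <= mean_unused Sset c b Q <= b.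
Proof.
  pose proof (argmax_nonempty Sset Q Hne) as HM.
  unfold mean_unused.
  split; [rewrite <- (uavg_const _ _ HM 0) at 1 | rewrite <- (uavg_const _ _ HM b) at 1];
    apply uavg_le; auto; intros S HSm; apply argmax_incl, HS in HSm;
    pose proof (dotR_toR_nonneg c S Pc); lra.
Qed.

Lemma drift_below_threshold T Q : length Q = N ->
  dotR c (toR Q) <= T - max_increment c N Amax ->
  mean_unused Sset c b Q - eps <=
    step_mean N Amax Sset pA (fun Q => Rmin (dotR c (toR Q)) T) Q - Rmin (dotR c (toR Q)) T.
Proof.
  intros HQ Hlow. pose proof (argmax_nonempty Sset Q Hne) as HM.
  rewrite (Rmin_left _ T) by (pose proof (max_increment_nonneg c N Amax Pc); lra).
  enough (mean_unused Sset c b Q + (dotR c (toR Q) - eps) <=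
          step_mean N Amax Sset pA (fun Q => Rmin (dotR c (toR Q)) T) Q) by lra.
  unfold mean_unused, step_mean. rewrite <- uavg_add_const by auto.
  apply uavg_le; auto. intros S HSm. destruct (HS S (argmax_incl _ _ _ HSm)) as [LS _].
  (* below the threshold the truncation is inactive after one step *)
  apply Rle_trans with (arrival_mean N Amax pA (fun a =>
     (dotR c (toR Q) - dotR c (toR S)) + dotR c (toR a))).
  - rewrite arrival_mean_plus, (arrival_mean_const N Amax pA lam Hv), (arrival_mean_dot N Amax pA lam Hv) by auto. lra.
  - apply (arrival_mean_le N Amax pA lam Hv). intros a Ha.
    pose proof (dotR_next_state_ge c N Amax Q a S Hc Pc HQ LS Ha).
    pose proof (dotR_next_state_le c N Amax Q a S Hc Pc HQ LS Ha).
    rewrite Rmin_left; lra.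
Qed.

Lemma drift_crude T Q : length Q = N ->
  mean_unused Sset c b Q <=
    step_mean N Amax Sset pA (fun Q => Rmin (dotR c (toR Q)) T) Q - Rmin (dotR c (toR Q)) T
    + 2 * b.
Proof.
  intros HQ. pose proof (argmax_nonempty Sset Q Hne) as HM.
  enough (Rmin (dotR c (toR Q)) T - b <=
          step_mean N Amax Sset pA (fun Q => Rmin (dotR c (toR Q)) T) Q)
    by (pose proof (mean_unused_bounds Q); lra).
  unfold step_mean. rewrite <- (uavg_const _ _ HM (Rmin (dotR c (toR Q)) T - b)).
  apply uavg_le; auto. intros S HSm. destruct (HS S (argmax_incl _ _ _ HSm)) as [LS HSb].
  rewrite <- (arrival_mean_const N Amax pA lam Hv (Rmin (dotR c (toR Q)) T - b)).
  apply (arrival_mean_le N Amax pA lam Hv). intros a Ha.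
  pose proof (dotR_next_state_ge c N Amax Q a S Hc Pc HQ LS Ha).
  pose proof (dotR_toR_nonneg c a Pc). pose proof (dotR_toR_nonneg c S Pc).
  pose proof (Rmin_l (dotR c (toR Q)) T). pose proof (Rmin_r (dotR c (toR Q)) T).
  apply Rmin_glb; lra.
Qed.

Lemma truncated_drift T Q : length Q = N -> 0 <= eps ->
  mean_unused Sset c b Q - eps <=
    step_mean N Amax Sset pA (fun Q => Rmin (dotR c (toR Q)) T) Q - Rmin (dotR c (toR Q)) T
    + 2 * b * (if Rle_dec (dotR c (toR Q)) (T - max_increment c N Amax) then 0 else 1).
Proof.
  intros HQ He. destruct (Rle_dec _ _) as [Hlow|_].
  - pose proof (drift_below_threshold T Q HQ Hlow). lra.
  - pose proof (drift_crude T Q HQ). lra.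
Qed.

End Drift.

(** * Stationarity *)

Definition successors (N Amax : nat) (Sset : list (list nat)) (Q : list nat) : list (list nat) :=
  flat_map (fun S => map (fun a => next_state Q a S) (vecs_upto N Amax)) (argmax Sset Q).

Lemma successors_length N Amax Sset Q Q' :
  (forall S, In S Sset -> length S = N) -> length Q = N ->
  In Q' (successors N Amax Sset Q) -> length Q' = N.
Proof.
  intros HS HQ H. apply in_flat_map in H. destruct H as [S [HSm H]].
  apply in_map_iff in H. destruct H as [a [<- Ha]].
  apply length_next_state; auto.
  - apply (vecs_upto_spec _ _ _ Ha).
  - apply HS, (argmax_incl _ _ _ HSm).
Qed.

Lemma finite_closure {T} (dec : forall x y : T, {x = y} + {x <> y})
  (P : T -> Prop) (succ : T -> list T) I :
  NoDup I -> Forall P I -> (forall x y, P x -> In y (succ x) -> P y) ->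
  exists B', NoDup (I ++ B') /\ Forall P B' /\
             forall x, In x I -> incl (succ x) (I ++ B').
Proof.
  intros HI PI Hsucc.
  set (fresh := fun y => if in_dec dec y I then false else true).
  exists (nodup dec (filter fresh (flat_map succ I))). split; [|split].
  - apply NoDup_app; [auto | apply NoDup_nodup |].
    intros y Hy Hy'. apply nodup_In, filter_In in Hy'. unfold fresh in Hy'.
    destruct (in_dec dec y I); [now destruct Hy' | tauto].
  - apply Forall_forall. intros y Hy. apply nodup_In, filter_In in Hy.
    destruct Hy as [Hy _]. apply in_flat_map in Hy. destruct Hy as [x [Hx Hy]].
    rewrite Forall_forall in PI. eauto.
  - intros x Hx y Hy. apply in_or_app. destruct (in_dec dec y I) as [|Hn]; [now left|].
    right. apply nodup_In, filter_In. split; [apply in_flat_map; eauto|].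
    unfold fresh. destruct (in_dec dec y I); tauto.
Qed.

Lemma step_mean_trans N Amax Sset pA g Q B :
  NoDup B -> incl (successors N Amax Sset Q) B ->
  step_mean N Amax Sset pA g Q =
  sumR (map (fun Q' => trans N Amax Sset pA Q Q' * g Q') B).
Proof.
  intros HB Hinc. unfold trans, step_mean, uavg, arrival_mean; cbv zeta.
  set (M := argmax Sset Q). symmetry.
  rewrite (sumR_ext _ (fun Q' => sumR (map (fun S => / INR (length M) *
     sumR (map (fun a =>
       (if list_eq_dec Nat.eq_dec (next_state Q a S) Q' then joint_prob pA a else 0) * g Q')
       (vecs_upto N Amax))) M))).
  2:{ intros Q' _. rewrite <- sumR_mulr. apply sumR_ext. intros S _.
      rewrite Rmult_assoc, <- sumR_mulr. reflexivity. }
  rewrite sumR_swap. apply sumR_ext. intros S HS.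
  rewrite sumR_mull. f_equal. rewrite sumR_swap. apply sumR_ext. intros a Ha.
  rewrite (sumR_single _ B (next_state Q a S)); auto.
  - destruct (list_eq_dec Nat.eq_dec _ _); [reflexivity | tauto].
  - apply Hinc, in_flat_map. exists S. split; auto. apply in_map_iff. eauto.
  - intros y Hy. destruct (list_eq_dec Nat.eq_dec _ _); [congruence | lra].
Qed.

Section Stationary.
Variables (N Amax : nat) (Sset : list (list nat)) (pA : nat -> nat -> R) (pi : list nat -> R).
Hypotheses (Hpi : is_stationary N Amax Sset pA pi)
           (HSlen : forall S, In S Sset -> length S = N).

Lemma stationary_mass_le_1 L : NoDup L -> Forall (fun Q => length Q = N) L ->
  sumR (map pi L) <= 1.
Proof. destruct Hpi as [_ [_ [H _]]]. intros. eapply has_sum_on_ub; eauto. Qed.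

Lemma stationary_step_mean_le g I B :
  NoDup I -> Forall (fun Q => length Q = N) I ->
  NoDup B -> Forall (fun Q => length Q = N) B ->
  (forall Q, In Q I -> incl (successors N Amax Sset Q) B) ->
  (forall Q, 0 <= g Q) ->
  sumR (map (fun Q => pi Q * step_mean N Amax Sset pA g Q) I) <=
  sumR (map (fun Q' => pi Q' * g Q') B).
Proof.
  destruct Hpi as [Hp [_ [_ Hst]]]. intros HI VI HB VB Hs Hg.
  rewrite (sumR_ext _ (fun Q => sumR (map (fun Q' => pi Q * trans N Amax Sset pA Q Q' * g Q') B))).
  2:{ intros Q HQ. rewrite (step_mean_trans N Amax Sset pA g Q B HB (Hs Q HQ)), <- sumR_mull.
      apply sumR_ext; intros; lra. }
  rewrite sumR_swap. apply sumR_le. intros Q' HQ'.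
  rewrite sumR_mulr, (Rmult_comm (pi Q')), (Rmult_comm _ (g Q')).
  apply Rmult_le_compat_l; auto.
  rewrite Forall_forall in VB. eapply has_sum_on_ub; eauto.
Qed.

(* What [I] sends outside itself in one step lands on states of total stationary
   mass at most [1 - pi(I)], where [g <= T]. *)
Lemma stationary_step_mean_bound g T I :
  NoDup I -> Forall (fun Q => length Q = N) I ->
  (forall Q, 0 <= g Q <= T) ->
  sumR (map (fun Q => pi Q * step_mean N Amax Sset pA g Q) I) <=
  sumR (map (fun Q => pi Q * g Q) I) + T * (1 - sumR (map pi I)).
Proof.
  intros HI VI Hg. pose proof Hpi as [Hp0 _].
  destruct (finite_closure (list_eq_dec Nat.eq_dec) (fun Q => length Q = N)
              (successors N Amax Sset) I HI VI) as [B' [HB [VB' HsB]]].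
  { intros Q Q' HQ HQ'. eapply successors_length; eauto. }
  assert (VB : Forall (fun Q => length Q = N) (I ++ B')) by (apply Forall_app; auto).
  pose proof (stationary_step_mean_le g I (I ++ B') HI VI HB VB HsB ltac:(firstorder)) as Hst.
  pose proof (stationary_mass_le_1 (I ++ B') HB VB) as Hmass.
  rewrite map_app, sumR_app in Hst, Hmass.
  assert (sumR (map (fun Q => pi Q * g Q) B') <= T * sumR (map pi B')).
  { rewrite <- sumR_mull. apply sumR_le. intros Q _.
    specialize (Hg Q). specialize (Hp0 Q). nra. }
  assert (0 <= T) by (specialize (Hg nil); lra).
  nra.
Qed.

Lemma stationary_mass_outside h L I :
  NoDup L -> Forall (fun Q => length Q = N) L ->
  NoDup I -> Forall (fun Q => length Q = N) I ->
  (forall Q, 0 <= h Q <= 1) -> (forall Q, In Q L -> h Q = 0) ->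
  sumR (map (fun Q => pi Q * h Q) I) <= 1 - sumR (map pi L).
Proof.
  intros HL VL HI VI Hh HhL. pose proof Hpi as [Hp0 _].
  set (outside := fun Q => if in_dec (list_eq_dec Nat.eq_dec) Q L then false else true).
  apply Rle_trans with (sumR (map (fun Q => if outside Q then pi Q else 0) I)).
  - apply sumR_le. intros Q _. specialize (Hh Q). specialize (Hp0 Q). unfold outside.
    destruct (in_dec _ Q L) as [HQ|_]; [rewrite (HhL Q HQ) |]; nra.
  - rewrite sumR_filter.
    enough (sumR (map pi (L ++ filter outside I)) <= 1) by (rewrite map_app, sumR_app in *; lra).
    apply stationary_mass_le_1.
    + apply NoDup_app; [auto | apply NoDup_filter; auto |].
      intros Q HQ HQ'. apply filter_In in HQ'. unfold outside in HQ'.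
      destruct (in_dec _ Q L); [now destruct HQ' | tauto].
    + apply Forall_app. split; [auto|]. apply Forall_forall. intros Q HQ.
      apply filter_In in HQ. rewrite Forall_forall in VI. apply VI; tauto.
Qed.

End Stationary.

(** * Mean unused service *)

Section MeanUnused.
Variables (N Amax : nat) (Sset : list (list nat)) (pA : nat -> nat -> R)
          (lam c : list R) (b eps : R) (pi : list nat -> R).
Hypotheses (Hc : length c = N) (Pc : Forall (fun v => 0 <= v) c)
           (HS : forall S, In S Sset -> length S = N /\ dotR c (toR S) <= b)
           (Hne : Sset <> []) (Hb : 0 < b) (Heps : 0 < eps)
           (Hv : valid_arrivals N Amax pA lam) (Hl : length lam = N)
           (Hlam : dotR c lam = b - eps)
           (Hpi : is_stationary N Amax Sset pA pi).

Let HSlen S (HS' : In S Sset) : length S = N := proj1 (HS S HS').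

Lemma window_mean_unused_le T L I : 0 < T ->
  NoDup L -> Forall (fun Q => length Q = N) L ->
  (forall Q, In Q L -> dotR c (toR Q) <= T - max_increment c N Amax) ->
  NoDup I -> Forall (fun Q => length Q = N) I ->
  sumR (map (fun Q => pi Q * mean_unused Sset c b Q) I) <=
  eps + T * (1 - sumR (map pi I)) + 2 * b * (1 - sumR (map pi L)).
Proof.
  intros HT NDL VL HL NDI VI. pose proof Hpi as [Hp0 _].
  set (g := fun Q => Rmin (dotR c (toR Q)) T).
  set (bad := fun Q => if Rle_dec (dotR c (toR Q)) (T - max_increment c N Amax) then 0 else 1).
  assert (Hdrift : sumR (map (fun Q => pi Q * mean_unused Sset c b Q) I) <=
     eps * sumR (map pi I) + (sumR (map (fun Q => pi Q * step_mean N Amax Sset pA g Q) I)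
     - sumR (map (fun Q => pi Q * g Q) I)) + 2 * b * sumR (map (fun Q => pi Q * bad Q) I)).
  { rewrite <- !sumR_mull, <- sumR_minus, <- !sumR_plus. apply sumR_le. intros Q HQ.
    rewrite Forall_forall in VI.
    pose proof (truncated_drift N Amax Sset pA lam c b eps Hc Pc HS Hne Hv Hl Hlam T Q
                  (VI Q HQ) ltac:(lra)) as D.
    specialize (Hp0 Q). apply (Rmult_le_compat_l (pi Q)) in D; auto.
    unfold g, bad in *. nra. }
  assert (Hstep : sumR (map (fun Q => pi Q * step_mean N Amax Sset pA g Q) I) <=
                  sumR (map (fun Q => pi Q * g Q) I) + T * (1 - sumR (map pi I))).
  { apply (stationary_step_mean_bound N Amax Sset pA pi Hpi HSlen g T I NDI VI).
    intros Q; unfold g; split; [|apply Rmin_r].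
    apply Rmin_glb; [apply dotR_toR_nonneg; auto | lra]. }
  assert (Hbad : sumR (map (fun Q => pi Q * bad Q) I) <= 1 - sumR (map pi L)).
  { apply (stationary_mass_outside N Amax Sset pA pi Hpi bad L I NDL VL NDI VI).
    - intros Q; unfold bad; destruct Rle_dec; lra.
    - intros Q HQ; unfold bad; destruct Rle_dec as [|Hn]; [reflexivity|].
      exfalso; apply Hn, HL, HQ. }
  assert (sumR (map pi I) <= 1) by (apply (stationary_mass_le_1 N Amax Sset pA); auto).
  assert (0 <= sumR (map pi I)) by (apply sumR_nonneg; auto).
  nra.
Qed.

Lemma stationary_mean_unused_le l :
  NoDup l -> Forall (fun Q => length Q = N) l ->
  sumR (map (fun Q => pi Q * mean_unused Sset c b Q) l) <= eps.
Proof.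
  intros Hnd Vl. pose proof Hpi as [Hp0 [_ [Hs1 _]]].
  apply Rle_plus_epsilon. intros eta Heta.
  destruct (has_sum_on_approx _ _ _ (eta / (4 * b)) Hs1) as [L1 [ND1 [VL1 HL1]]].
  { apply Rdiv_lt_0_compat; lra. }
  assert (HV : forall Q, 0 <= dotR c (toR Q)) by (intros; apply dotR_toR_nonneg; auto).
  set (T := max_increment c N Amax + sumR (map (fun Q => dotR c (toR Q)) L1) + 1).
  assert (HT : 0 < T).
  { pose proof (max_increment_nonneg c N Amax Pc).
    pose proof (sumR_nonneg _ L1 (fun Q _ => HV Q)). unfold T; lra. }
  assert (HL1T : forall Q, In Q L1 -> dotR c (toR Q) <= T - max_increment c N Amax).
  { intros Q HQ. pose proof (sumR_elem_le _ L1 Q HQ (fun Q _ => HV Q)). unfold T; lra. }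
  destruct (has_sum_on_approx _ _ _ (eta / (2 * T)) Hs1) as [L2 [ND2 [VL2 HL2]]].
  { apply Rdiv_lt_0_compat; lra. }
  set (I := nodup (list_eq_dec Nat.eq_dec) (l ++ L1 ++ L2)).
  assert (NDI : NoDup I) by apply NoDup_nodup.
  assert (inI : forall Q, In Q l \/ In Q L2 -> In Q I).
  { intros Q HQ. apply nodup_In. rewrite !in_app_iff. tauto. }
  assert (VI : Forall (fun Q => length Q = N) I).
  { apply Forall_forall. intros Q HQ. apply nodup_In in HQ. rewrite !in_app_iff in HQ.
    rewrite Forall_forall in Vl, VL1, VL2. destruct HQ as [|[|]]; auto. }
  pose proof (window_mean_unused_le T L1 I HT ND1 VL1 HL1T NDI VI) as Hwin.
  assert (sumR (map (fun Q => pi Q * mean_unused Sset c b Q) l) <=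
          sumR (map (fun Q => pi Q * mean_unused Sset c b Q) I)).
  { apply sumR_incl; auto. { intros Q HQ; apply inI; auto. }
    intros Q _. apply Rmult_le_pos; [auto | apply (mean_unused_bounds N Sset c b Pc HS Hne)]. }
  assert (sumR (map pi L2) <= sumR (map pi I)).
  { apply sumR_incl; auto. intros Q HQ; apply inI; auto. }
  assert (T * (1 - sumR (map pi I)) <= T * (eta / (2 * T))) by (apply Rmult_le_compat_l; lra).
  assert (2 * b * (1 - sumR (map pi L1)) <= 2 * b * (eta / (4 * b)))
    by (apply Rmult_le_compat_l; lra).
  assert (T * (eta / (2 * T)) = eta / 2) by (field; lra).
  assert (2 * b * (eta / (4 * b)) = eta / 2) by (field; lra).
  lra.
Qed.

End MeanUnused.

(** * Higher moments of the unused service *)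

Lemma rpow_le_linear x B r : 0 <= x <= B -> 1 < r -> rpow x r <= Rpower B (r - 1) * x.
Proof.
  intros Hx Hr. unfold rpow. destruct (Rle_dec x 0).
  - assert (0 < Rpower B (r - 1)) by apply exp_pos. nra.
  - replace r with (1 + (r - 1)) at 1 by ring.
    rewrite Rpower_plus, Rpower_1, Rmult_comm by lra.
    apply Rmult_le_compat_r; [lra|]. apply Rle_Rpower_l; lra.
Qed.

Lemma unused_moment_le N Sset c b r Q :
  Forall (fun v => 0 <= v) c ->
  (forall S, In S Sset -> length S = N /\ dotR c (toR S) <= b) ->
  Sset <> [] -> 1 < r ->
  unused_moment Sset c b r Q <= Rpower b (r - 1) * mean_unused Sset c b Q.
Proof.
  intros Pc HS Hne Hr. pose proof (argmax_nonempty Sset Q Hne) as HM.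
  unfold mean_unused. rewrite <- uavg_scale by exact HM.
  apply uavg_le; auto. intros S HSm. destruct (HS S (argmax_incl _ _ _ HSm)) as [_ HSb].
  apply rpow_le_linear; [|lra]. pose proof (dotR_toR_nonneg c S Pc). lra.
Qed.

Lemma service_vector_in_hull N Sset S :
  NoDup Sset -> In S Sset -> length S = N -> in_conv_hull N Sset (toR S).
Proof.
  intros Hnd HS HL. split; [rewrite length_toR; auto|].
  set (w := fun S' : list nat => if list_eq_dec Nat.eq_dec S' S then 1 else 0).
  exists (map w Sset). split; [apply length_map|]. split; [|split].
  - apply Forall_forall. intros x Hx. apply in_map_iff in Hx. destruct Hx as [S' [<- _]].
    unfold w. destruct (list_eq_dec _ _ _); lra.
  - rewrite (sumR_single w Sset S); auto; unfold w.
    + destruct (list_eq_dec _ _ _); congruence.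
    + intros y Hy. destruct (list_eq_dec _ _ _); congruence.
  - intros n Hn.
    assert (Hcomb : forall l, combine (map w l) l = map (fun x => (w x, x)) l)
      by (induction l as [|x l IH]; simpl; [|rewrite IH]; auto).
    rewrite Hcomb, map_map. simpl.
    rewrite (sumR_single (fun x => w x * INR (nth n x 0%nat)) Sset S); auto; unfold w.
    + rewrite nth_toR. destruct (list_eq_dec _ _ _); [lra | congruence].
    + intros y Hy. destruct (list_eq_dec _ _ _); [congruence | lra].
Qed.

Theorem claim1 (N Amax Smax : nat) (Sset : list (list nat)) (K : nat)
  (c : nat -> list R) (b : nat -> R) (k : nat) (lamk : list R)
  (pA : R -> nat -> nat -> R) (eps_max : R) :
  (0 < N)%nat ->
  Sset <> [] -> NoDup Sset ->
  (forall S, In S Sset -> length S = N /\ forall n, (nth n S 0 <= Smax)%nat) ->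
  (forall j, (j < K)%nat ->
     length (c j) = N /\ Forall (fun x => 0 <= x) (c j) /\ norm2 (c j) = 1 /\ 0 < b j) ->
  (forall r, length r = N ->
     (in_conv_hull N Sset r <->
      (Forall (fun x => 0 <= x) r /\ forall j, (j < K)%nat -> dotR (c j) r <= b j))) ->
  (k < K)%nat ->
  in_rel_interior N (face N Sset (c k) (b k)) lamk ->
  0 < eps_max ->
  (forall eps, 0 < eps < eps_max ->
     valid_arrivals N Amax (pA eps) (vsub lamk (map (Rmult eps) (c k)))) ->
  forall r', 1 < r' ->
  exists beta2 eps0, 0 < eps0 /\
    forall eps, 0 < eps < eps0 ->
    forall pi, is_stationary N Amax Sset (pA eps) pi ->
    exists e,
      has_sum_on (fun Q => length Q = N)
                 (fun Q => pi Q * unused_moment Sset (c k) (b k) r' Q) e /\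
      e <= beta2 * eps.
Proof.
  intros HN Hne Hnd HSset Hc Hhull Hk Hrel Heps Harr r' Hr'.
  destruct (Hc k Hk) as [Lc [Pc [Nc Hb]]].
  destruct Hrel as [[[Llam _] Hface] _].
  assert (HS : forall S, In S Sset -> length S = N /\ dotR (c k) (toR S) <= b k).
  { intros S HS. destruct (HSset S HS) as [LS _]. split; auto.
    assert (Hl : length (toR S) = N) by (rewrite length_toR; auto).
    apply (proj1 (Hhull _ Hl) (service_vector_in_hull N Sset S Hnd HS LS)); auto. }
  exists (Rpower (b k) (r' - 1)), eps_max. split; auto. intros eps Heps' pi Hpi.
  set (lam := vsub lamk (map (Rmult eps) (c k))).
  assert (Hl : length lam = N)
    by (unfold lam, vsub; rewrite length_map, length_combine, length_map; lia).
  assert (Hlam : dotR (c k) lam = b k - eps)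
    by (unfold lam; rewrite dotR_vsub_scale, Hface, dotR_unit by (auto; lia); lra).
  apply has_sum_on_bounded. intros l Hnd_l Vl.
  apply Rle_trans with (Rpower (b k) (r' - 1) *
                        sumR (map (fun Q => pi Q * mean_unused Sset (c k) (b k) Q) l)).
  - rewrite <- sumR_mull. apply sumR_le. intros Q _. destruct Hpi as [Hp0 _].
    pose proof (unused_moment_le N Sset (c k) (b k) r' Q Pc HS Hne Hr'). specialize (Hp0 Q). nra.
  - apply Rmult_le_compat_l; [left; apply exp_pos|].
    apply (stationary_mean_unused_le N Amax Sset (pA eps) lam (c k) (b k) eps pi); auto; lra.
Qed.
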